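(* Let $X$ be a polyhedral normed space with closed unit ball $B_X$ and dual unit ball $B_{X^*}$. Let $y\in X$ and $E=J(y)$. Then $L_E=\{x\in X: \phi(x)=\psi(x)\text{ for all }\phi,\psi\in E\}$ equals the linear span of the face $F_E=\{x\in B_X: \phi(x)=1\text{ for all }\phi\in E\}$.
   Context: A polyhedral normed space is a finite-dimensional real normed space whose closed unit ball has finitely many extreme points. The duality map is $J(x)=\{\phi\in B_{X^*}: \phi(x)=\|x\|\}$. The linear span of the empty set is $\{0\}$. *)

(* A finite-dimensional real normed space is modelled as
   'rV[R]_n (R : realType) equipped with an arbitrary norm N. *)
From HB Require Import structures.
From mathcomp Require Import all_boot all_order all_algebra.
From mathcomp Require Import reals.
Set Implicit Arguments. Unset Strict Implicit. Unset Printing Implicit Defensive.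
Import Order.TTheory GRing.Theory Num.Theory.
Local Open Scope ring_scope.

Section Defs.
Variables (R : realType) (n : nat).

Definition is_norm (N : 'rV[R]_n -> R) : Prop :=
  [/\ forall x, 0 <= N x,
      forall x, N x = 0 -> x = 0,
      forall (a : R) x, N (a *: x) = `|a| * N x &
      forall x y, N (x + y) <= N x + N y].

Definition unit_ball (N : 'rV[R]_n -> R) (x : 'rV[R]_n) : Prop := N x <= 1.

Definition extreme_point (C : 'rV[R]_n -> Prop) (x : 'rV[R]_n) : Prop :=
  C x /\ forall (a b : 'rV[R]_n) (t : R), C a -> C b -> 0 < t < 1 ->
    x = t *: a + (1 - t) *: b -> a = x /\ b = x.

Definition polyhedral (N : 'rV[R]_n -> R) : Prop :=
  exists s : seq 'rV[R]_n, forall x, extreme_point (unit_ball N) x -> x \in s.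

(* a linear functional on 'rV_n is represented by a column vector c:
   phi(x) = x *m c *)
Definition ev (c : 'cV[R]_n) (x : 'rV[R]_n) : R := (x *m c) 0 0.

Definition dual_ball (N : 'rV[R]_n -> R) (c : 'cV[R]_n) : Prop :=
  forall x, N x <= 1 -> `|ev c x| <= 1.

Definition duality_map (N : 'rV[R]_n -> R) (y : 'rV[R]_n) (c : 'cV[R]_n) : Prop :=
  dual_ball N c /\ ev c y = N y.

Definition L_set (E : 'cV[R]_n -> Prop) (x : 'rV[R]_n) : Prop :=
  forall phi psi, E phi -> E psi -> ev phi x = ev psi x.

Definition face (N : 'rV[R]_n -> R) (E : 'cV[R]_n -> Prop) (x : 'rV[R]_n) : Prop :=
  unit_ball N x /\ forall phi, E phi -> ev phi x = 1.

(* linear span of an arbitrary set: all finite linear combinations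
   (k = 0 gives 0, so span of the empty set is {0}) *)
Definition lin_span (S : 'rV[R]_n -> Prop) (x : 'rV[R]_n) : Prop :=
  exists (k : nat) (a : 'I_k -> R) (v : 'I_k -> 'rV[R]_n),
    (forall i, S (v i)) /\ x = \sum_(i < k) a i *: v i.

End Defs.

From HB Require Import structures.
From mathcomp Require Import all_boot all_order all_algebra.
From mathcomp Require Import classical_sets reals ring lra.
From Stdlib Require Import Classical FunctionalExtensionality PropExtensionality.
Import Order.TTheory GRing.Theory Num.Theory.
Set Implicit Arguments. Unset Strict Implicit. Unset Printing Implicit Defensive.
Local Open Scope ring_scope.

(* Normalise y to a unit vector, so that E = J(y) is the set of norming
   functionals of y.  For x in L_E and phi0 in E, the vector w = x - phi0(x) y is
   killed by every phi in E.  Polyhedrality forces y + t w into the unit ball for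
   some t > 0: the ball is the convex hull of its finitely many extreme points e_i
   (finite-dimensional Krein-Milman, by induction on the dimension of the space of
   two-sided directions at a point), so if w pointed out of the ball it would lie
   outside the cone spanned by the e_i - y, and Farkas' lemma would produce a
   norming functional of y that is positive on w.  Then y and y + t w lie in F_E
   and x is a linear combination of them.  For y = 0, E is the whole dual ball,
   which separates points, so L_E = {0}. *)

Section Norm.
Variables (R : realType) (n : nat) (N : 'rV[R]_n -> R).
Hypothesis hN : is_norm N.
Implicit Types (x y d : 'rV[R]_n).

Lemma N_ge0 x : 0 <= N x. Proof. by case: hN. Qed.
Lemma N_eq0 x : N x = 0 -> x = 0. Proof. by case: hN => _ + _ _; apply. Qed.
Lemma NZ a x : N (a *: x) = `|a| * N x. Proof. by case: hN. Qed.
Lemma ND x y : N (x + y) <= N x + N y. Proof. by case: hN. Qed.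

Lemma N0 : N 0 = 0.
Proof. by rewrite -(scale0r (0 : 'rV[R]_n)) NZ normr0 mul0r. Qed.

Lemma NN x : N (- x) = N x.
Proof. by rewrite -scaleN1r NZ normrN normr1 mul1r. Qed.

Lemma N_gt0 x : x != 0 -> 0 < N x.
Proof.
move=> x0; rewrite lt_def N_ge0 andbT.
by apply: contra x0 => /eqP/N_eq0 ->.
Qed.

Lemma N_normalize x : x != 0 -> N ((N x)^-1 *: x) = 1.
Proof.
move=> x0; have Nx0 := N_gt0 x0.
by rewrite NZ ger0_norm ?invr_ge0 ?ltW // mulVf ?gt_eqF.
Qed.

Lemma N_sum m (F : nat -> 'rV[R]_n) :
  N (\sum_(i < m) F i) <= \sum_(i < m) N (F i).
Proof.
elim: m => [|m IH]; first by rewrite !big_ord0 N0.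
by rewrite !big_ord_recr /=; apply: le_trans (ND _ _) _; rewrite lerD2r.
Qed.

Lemma ball_convex t x y : 0 <= t <= 1 -> N x <= 1 -> N y <= 1 ->
  N (t *: x + (1 - t) *: y) <= 1.
Proof.
move=> /andP[t0 t1] hx hy; apply: le_trans (ND _ _) _.
rewrite !NZ (ger0_norm t0) (ger0_norm (_ : 0 <= 1 - t)) ?subr_ge0 //; nra.
Qed.

Lemma ball_segment x d e s : N x <= 1 -> N (x + e *: d) <= 1 -> 0 <= s <= e ->
  N (x + s *: d) <= 1.
Proof.
move=> hx hxe /andP[s0 se].
have [e0|e0] := eqVneq e 0.
  have -> : s = 0 by apply/eqP; rewrite eq_le s0 andbT -e0.
  by rewrite scale0r addr0.
have ep : 0 < e by rewrite lt_def e0 (le_trans s0 se).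
have -> : x + s *: d = (s / e) *: (x + e *: d) + (1 - s / e) *: x.
  by apply/rowP => j; rewrite !mxE; field; rewrite gt_eqF.
apply: ball_convex => //.
apply/andP; split; first by rewrite divr_ge0 // ltW.
by rewrite ler_pdivrMr // mul1r.
Qed.

End Norm.

Section Functional.
Variables (R : realType) (n : nat).
Implicit Types (c d : 'cV[R]_n) (u v : 'rV[R]_n).

Lemma evDr c u v : ev c (u + v) = ev c u + ev c v.
Proof. by rewrite /ev mulmxDl !mxE. Qed.
Lemma evZr c a u : ev c (a *: u) = a * ev c u.
Proof. by rewrite /ev -scalemxAl !mxE. Qed.
Lemma evNr c u : ev c (- u) = - ev c u.
Proof. by rewrite /ev mulNmx !mxE. Qed.
Lemma evBr c u v : ev c (u - v) = ev c u - ev c v.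
Proof. by rewrite evDr evNr. Qed.
Lemma ev0r c : ev c 0 = 0.
Proof. by rewrite /ev mul0mx !mxE. Qed.
Lemma ev_sumr c m (F : nat -> 'rV[R]_n) :
  ev c (\sum_(i < m) F i) = \sum_(i < m) ev c (F i).
Proof. by rewrite /ev mulmx_suml summxE. Qed.
Lemma evZl c a u : ev (a *: c) u = a * ev c u.
Proof. by rewrite /ev -scalemxAr !mxE. Qed.
Lemma evBl c d u : ev (c - d) u = ev c u - ev d u.
Proof. by rewrite /ev mulmxBr !mxE. Qed.
Lemma ev0l u : ev 0 u = 0.
Proof. by rewrite /ev mulmx0 mxE. Qed.

Lemma ev_tr_gt0 u : u != 0 -> 0 < ev u^T u.
Proof.
move=> u0; rewrite /ev mxE.
have sq_ge0 j : 0 <= u 0 j * u^T j 0 by rewrite mxE -expr2 sqr_ge0.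
rewrite lt_def sumr_ge0 ?andbT //; apply: contra u0 => /eqP/psumr_eq0P u2_0.
apply/eqP/rowP => j; rewrite mxE.
by have /eqP := u2_0 (fun j _ => sq_ge0 j) j isT; rewrite mxE -expr2 sqrf_eq0 => /eqP.
Qed.

Definition cone m (g : nat -> 'rV[R]_n) u :=
  exists mu : nat -> R, (forall i, 0 <= mu i) /\ u = \sum_(i < m) mu i *: g i.

Definition proj_ker c g u := u - (ev c u / ev c g) *: g.

Lemma ev_proj_ker c c' g u :
  ev c' (proj_ker c g u) = ev (c' - (ev c' g / ev c g) *: c) u.
Proof.
rewrite /proj_ker evBr evZr evBl evZl.
by congr (_ - _); rewrite mulrAC -mulrA mulrC.
Qed.

Lemma farkas m (g : nat -> 'rV[R]_n) u : cone m g u \/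
  exists c, (forall i, (i < m)%N -> ev c (g i) <= 0) /\ 0 < ev c u.
Proof.
elim: m g u => [|m IH] g u.
  have [->|u0] := eqVneq u 0.
    by left; exists (fun _ => 0); split => //; rewrite big_ord0.
  by right; exists u^T; split => //; apply: ev_tr_gt0.
have [[mu [mu0 ->]]|[c [hc cu]]] := IH g u.
  left; exists (fun i => if i == m then 0 else mu i); split.
    by move=> i; case: ifP.
  rewrite big_ord_recr /= eqxx scale0r addr0.
  by apply: eq_bigr => i _; rewrite ltn_eqF.
have [cgm|cgm] := leP (ev c (g m)) 0.
  right; exists c; split => // i; rewrite ltnS leq_eqVlt => /orP[/eqP ->|] //.
  exact: hc.
(* Eliminate [g m]: project everything onto the kernel of [c] along [g m]. *)
have cgm0 : ev c (g m) != 0 by rewrite gt_eqF.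
have [[mu [mu0 hmu]]|[c' [hc' cu']]] := IH (proj_ker c (g m) \o g) (proj_ker c (g m) u).
  left; pose S := \sum_(i < m) mu i * (ev c (g i) / ev c (g m)).
  exists (fun i => if i == m then ev c u / ev c (g m) - S else mu i); split.
    move=> i; case: ifP => _ //; rewrite subr_ge0.
    apply: (@le_trans _ _ 0); last by rewrite divr_ge0 ?ltW.
    rewrite /S -oppr_ge0 -sumrN; apply: sumr_ge0 => j _.
    by rewrite -mulrN -mulNr mulr_ge0 //; apply: divr_ge0; rewrite ?oppr_ge0 ?hc // ltW.
  rewrite big_ord_recr /= eqxx.
  under eq_bigr => i _ do rewrite ltn_eqF //.
  rewrite -[LHS](subrK ((ev c u / ev c (g m)) *: g m)) -/(proj_ker c (g m) u) hmu.
  rewrite scalerBl addrCA [RHS]addrC; congr (_ + _).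
  rewrite /S scaler_suml -sumrB; apply: eq_bigr => i _.
  by rewrite /= /proj_ker scalerBr scalerA.
right; exists (c' - (ev c' (g m) / ev c (g m)) *: c); split; last by rewrite -ev_proj_ker.
move=> i; rewrite ltnS leq_eqVlt => /orP[/eqP ->|im].
  by rewrite evBl evZl mulfVK // subrr.
by rewrite -ev_proj_ker; exact: hc'.
Qed.

End Functional.

Lemma subspace_rowspace (R : realType) (n : nat) (S : 'rV[R]_n -> Prop) :
  S 0 -> (forall a v, S v -> S (a *: v)) -> (forall u v, S u -> S v -> S (u + v)) ->
  exists A : 'M[R]_n, forall v, S v <-> (v <= A)%MS.
Proof.
move=> S0 SZ SD.
have grow : forall j, exists A : 'M[R]_n, (forall u : 'rV_n, (u <= A)%MS -> S u) /\
    ((j <= \rank A)%N \/ forall v, S v -> (v <= A)%MS).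
  elim=> [|j [A [AS [rkA|SA]]]].
  - exists 0; split; last by left.
    by move=> u; rewrite submx0 => /eqP ->.
  - have [SA|nSA] := classic (forall v, S v -> (v <= A)%MS).
      by exists A; split => //; right.
    have [v nv] := not_all_ex_not _ _ nSA.
    have [Sv vA] := imply_to_and _ _ nv.
    exists (A + v)%MS; split.
      move=> u /sub_addsmxP [[u1 u2] /= ->]; apply: SD; first exact/AS/submxMl.
      have /sub_rVP [a ->] : (u2 *m v <= v)%MS by apply: submxMl.
      exact: SZ.
    left; apply: leq_ltn_trans rkA _; apply: rank_ltmx.
    rewrite ltmxE addsmxSl /=; apply: contra_notN vA => Av.
    exact: submx_trans (addsmxSr A v) Av.
  - by exists A; split => //; right.
have [A [AS [|SA]]] := grow n.+1; first by rewrite ltnNge rank_leq_col.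
by exists A => v; split; [apply: SA | apply: AS].
Qed.

Section FreeDirections.
Variables (R : realType) (n : nat) (N : 'rV[R]_n -> R).
Hypothesis hN : is_norm N.
Implicit Types (x y d : 'rV[R]_n).

Definition free_dir x d :=
  exists e, 0 < e /\ N (x + e *: d) <= 1 /\ N (x - e *: d) <= 1.

Lemma free_dir0 x : N x <= 1 -> free_dir x 0.
Proof. by move=> hx; exists 1; rewrite scaler0 addr0 subr0. Qed.

Lemma free_dirZ x d a : N x <= 1 -> free_dir x d -> free_dir x (a *: d).
Proof.
move=> hx [e [e0 [xpe xme]]].
have [->|a0] := eqVneq a 0; first by rewrite scale0r; exact: free_dir0.
exists (e / `|a|); split; first by rewrite divr_gt0 ?normr_gt0.
rewrite scalerA; have [ap|an] := ltP 0 a.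
  by rewrite gtr0_norm // divfK ?gt_eqF.
rewrite ler0_norm // invrN mulrN mulNr divfK // scaleNr opprK.
by split; rewrite // -scaleNr opprK.
Qed.

Lemma free_dirD x d1 d2 : N x <= 1 -> free_dir x d1 -> free_dir x d2 ->
  free_dir x (d1 + d2).
Proof.
move=> hx [e1 [e10 [xpe1 xme1]]] [e2 [e20 [xpe2 xme2]]].
set e := Num.min e1 e2.
have e0 : 0 < e by rewrite lt_min e10.
have ee1 : 0 <= e <= e1 by rewrite ltW //= ge_min lexx.
have ee2 : 0 <= e <= e2 by rewrite ltW //= ge_min lexx orbT.
have half : 0 <= (2^-1 : R) <= 1 by apply/andP; split; lra.
exists (e / 2); split; first exact: divr_gt0.
split.
  have -> : x + e / 2 *: (d1 + d2) = 2^-1 *: (x + e *: d1) + (1 - 2^-1) *: (x + e *: d2).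
    by apply/rowP => j; rewrite !mxE; field.
  exact (ball_convex hN half (ball_segment hN hx xpe1 ee1) (ball_segment hN hx xpe2 ee2)).
have -> : x - e / 2 *: (d1 + d2) =
    2^-1 *: (x + e *: - d1) + (1 - 2^-1) *: (x + e *: - d2).
  by apply/rowP => j; rewrite !mxE; field.
rewrite -scalerN in xme1; rewrite -scalerN in xme2.
exact (ball_convex hN half (ball_segment hN hx xme1 ee1) (ball_segment hN hx xme2 ee2)).
Qed.

Lemma free_dir_convex x y t d : N x <= 1 -> N y <= 1 -> 0 < t <= 1 -> free_dir x d ->
  free_dir (t *: x + (1 - t) *: y) d.
Proof.
move=> hx hy /andP[t0 t1] [e [e0 [xpe xme]]].
have ht : 0 <= t <= 1 by rewrite ltW.
exists (t * e); split; first exact: mulr_gt0.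
split.
  have -> : t *: x + (1 - t) *: y + (t * e) *: d = t *: (x + e *: d) + (1 - t) *: y.
    by apply/rowP => j; rewrite !mxE; ring.
  exact: ball_convex.
have -> : t *: x + (1 - t) *: y - (t * e) *: d = t *: (x - e *: d) + (1 - t) *: y.
  by apply/rowP => j; rewrite !mxE; ring.
exact: ball_convex.
Qed.

Lemma free_dir_rank_lt x y (A : 'M[R]_n) d : N y <= 1 ->
  (forall v, free_dir y v -> free_dir x v) -> (forall v, free_dir x v -> (v <= A)%MS) ->
  (d <= A)%MS -> ~ free_dir y d ->
  exists B : 'M[R]_n, (\rank B < \rank A)%N /\ forall v, free_dir y v -> (v <= B)%MS.
Proof.
move=> hy yx xA dA yd.
have [B yB] := subspace_rowspace (free_dir0 hy) (fun a v => free_dirZ a hy)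
  (fun u v => free_dirD hy).
exists B; split; last by move=> v /yB.
apply: rank_ltmx; rewrite ltmxE; apply/andP; split.
  by apply/row_subP => i; apply/xA/yx/yB; exact: row_sub.
by apply: contra_notN yd => BA; apply/yB; exact: submx_trans dA BA.
Qed.

Lemma ray_exit x d : N x <= 1 -> d != 0 ->
  exists s, (forall t, 0 <= t -> N (x + t *: d) <= 1 -> t <= s) /\ N (x + s *: d) <= 1.
Proof.
move=> hx d0; have Nd0 := N_gt0 hN d0.
pose E := fun t : R => 0 <= t /\ N (x + t *: d) <= 1.
have supE : has_sup E.
  split; first by exists 0; split => //; rewrite scale0r addr0.
  exists (2 / N d) => t [t0 ht]; rewrite ler_pdivlMr //.
  have := ND hN (x + t *: d) (- x); rewrite (NN hN) addrC addKr (NZ hN) ger0_norm //.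
  lra.
exists (sup E); split; first by move=> t t0 ht; apply: sup_upper_bound.
rewrite leNgt; apply/negP => hlt.
pose eps := (N (x + sup E *: d) - 1) / N d.
have eps0 : 0 < eps by rewrite divr_gt0 // subr_gt0.
have [e [e0 he] supe] := sup_adherent eps0 supE.
have eE : e <= sup E by apply: sup_upper_bound.
have : N (x + sup E *: d) <= N (x + e *: d) + (sup E - e) * N d.
  rewrite -(ger0_norm (_ : 0 <= sup E - e)) ?subr_ge0 // -(NZ hN).
  by apply: le_trans (ND hN _ _); rewrite -addrA -scalerDl addrCA subrr addr0.
have : (sup E - e) * N d < eps * N d by rewrite ltr_pM2r //; lra.
rewrite /eps mulfVK ?gt_eqF //; lra.
Qed.

Lemma exit_point x d : N x <= 1 -> d != 0 -> free_dir x d ->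
  exists s, 0 < s /\ N (x + s *: d) <= 1 /\ ~ free_dir (x + s *: d) d.
Proof.
move=> hx d0 [e [e0 [xpe _]]].
have [s [s_max xps]] := ray_exit hx d0.
have es : e <= s by apply: s_max => //; exact: ltW.
have s0 : 0 < s := lt_le_trans e0 es.
exists s; do 2!split => //; move=> [f [f0 [hf _]]].
have : s + f <= s by apply: s_max; [rewrite addr_ge0 ?ltW | rewrite scalerDl addrA].
lra.
Qed.

Lemma nonextreme_free_dir x : N x <= 1 -> ~ extreme_point (unit_ball N) x ->
  exists2 d, d != 0 & free_dir x d.
Proof.
move=> hx not_ext; apply: NNPP => no_dir; apply: not_ext.
split => // a b t ha hb /andP[t0 t1] xE.
have t1' : 0 < 1 - t by rewrite subr_gt0.
have ax : a = x.
  apply: NNPP => ax; apply: no_dir; exists (a - x); first by rewrite subr_eq0; apply/eqP.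
  set f := Num.min 1 (t / (1 - t)).
  have f0 : 0 < f by rewrite lt_min ltr01 divr_gt0.
  exists f; split => //; split.
    apply: (ball_segment hN (e := 1) hx); first by rewrite scale1r addrC subrK.
    by rewrite ltW //= ge_min lexx.
  have xb : x + (t / (1 - t)) *: - (a - x) = b.
    by rewrite xE; apply/rowP => j; rewrite !mxE; field; rewrite gt_eqF.
  rewrite -scalerN; apply: (ball_segment hN (e := t / (1 - t)) hx); first by rewrite xb.
  by rewrite ltW //= ge_min lexx orbT.
split => //; apply/rowP => j; have := congr1 (fun v : 'rV[R]_n => v 0 j) xE.
rewrite /= !mxE ax => xj.
have : (1 - t) * (b 0 j - x 0 j) = 0 by rewrite mulrBr; lra.
by move/eqP; rewrite mulf_eq0 gt_eqF //= subr_eq0 => /eqP.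
Qed.

End FreeDirections.

Section ConvexHull.
Variables (R : realType) (n : nat) (s : seq 'rV[R]_n).

Definition in_hull x := exists lam : nat -> R, (forall i, 0 <= lam i) /\
  \sum_(i < size s) lam i = 1 /\ x = \sum_(i < size s) lam i *: s`_i.

Lemma in_hull_convex t x y : 0 <= t <= 1 -> in_hull x -> in_hull y ->
  in_hull (t *: x + (1 - t) *: y).
Proof.
move=> /andP[t0 t1] [lx [lx0 [lx1 ->]]] [ly [ly0 [ly1 ->]]].
exists (fun i => t * lx i + (1 - t) * ly i); split.
  by move=> i; rewrite addr_ge0 ?mulr_ge0 ?subr_ge0.
split; first by rewrite big_split /= -!mulr_sumr lx1 ly1; ring.
rewrite !scaler_sumr -big_split /=; apply: eq_bigr => i _.
by rewrite !scalerA -scalerDl.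
Qed.

Lemma mem_in_hull x : x \in s -> in_hull x.
Proof.
move=> xs; have js : (index x s < size s)%N by rewrite index_mem.
pose j := Ordinal js.
exists (fun i => (i == index x s)%:R); split; first by move=> i; rewrite ler0n.
have delta i : i != j -> (nat_of_ord i == index x s)%:R = 0 :> R.
  by move=> ij; rewrite (negbTE (ij : nat_of_ord i != index x s)).
split.
  by rewrite (bigD1 j) //= eqxx big1 ?addr0 // => i /delta.
rewrite (bigD1 j) //= eqxx scale1r nth_index // big1 ?addr0 // => i /delta ->.
by rewrite scale0r.
Qed.

End ConvexHull.

Section KreinMilman.
Variables (R : realType) (n : nat) (N : 'rV[R]_n -> R).
Hypothesis hN : is_norm N.
Variable s : seq 'rV[R]_n.
Hypothesis s_ext : forall x, extreme_point (unit_ball N) x -> x \in s.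

(* Induction on the dimension of the space of free directions at [x]: moving
   along a free direction to both exit points of the ball kills that direction. *)
Lemma in_hull_free_dir_rank k x (A : 'M[R]_n) : (\rank A <= k)%N -> N x <= 1 ->
  (forall d, free_dir N x d -> (d <= A)%MS) -> in_hull s x.
Proof.
elim: k x A => [|k IH] x A rkA hx xA;
  (have [ext|/(nonextreme_free_dir hN hx) [d d0 xd]] :=
     classic (extreme_point (unit_ball N) x); first exact/mem_in_hull/s_ext).
  move: rkA (xA d xd); rewrite leqn0 mxrank_eq0 => /eqP ->.
  by rewrite submx0 (negbTE d0).
have [p [p0 [a_ball a_d]]] := exit_point hN hx d0 xd.
have md0 : - d != 0 by rewrite oppr_eq0.
have xmd : free_dir N x (- d) by rewrite -scaleN1r; apply: free_dirZ.
have [q [q0 [b_ball b_d]]] := exit_point hN hx md0 xmd.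
set a := x + p *: d in a_ball a_d; set b := x + q *: - d in b_ball b_d.
pose t := q / (p + q).
have t01 : 0 < t <= 1 by rewrite divr_gt0 ?addr_gt0 //= ler_pdivrMr ?addr_gt0 //; lra.
have t'01 : 0 < 1 - t <= 1.
  have -> : 1 - t = p / (p + q) by rewrite /t; field; rewrite gt_eqF ?addr_gt0.
  by rewrite divr_gt0 ?addr_gt0 //= ler_pdivrMr ?addr_gt0 //; lra.
have xab : x = t *: a + (1 - t) *: b.
  by apply/rowP => j; rewrite !mxE /t; field; rewrite gt_eqF ?addr_gt0.
have xba : x = (1 - t) *: b + (1 - (1 - t)) *: a by rewrite subKr addrC.
have [B [rkB aB]] : exists B : 'M[R]_n,
    (\rank B < \rank A)%N /\ forall v, free_dir N a v -> (v <= B)%MS.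
  apply: (free_dir_rank_lt hN (x := x)) (xA d xd) a_d => // v av.
  by rewrite xab; apply: free_dir_convex.
have [C [rkC bC]] : exists C : 'M[R]_n,
    (\rank C < \rank A)%N /\ forall v, free_dir N b v -> (v <= C)%MS.
  apply: (free_dir_rank_lt hN (x := x)) (xA d xd) _ => //.
    by move=> v bv; rewrite xba; apply: free_dir_convex.
  by move=> bd; apply: b_d; rewrite -scaleN1r; apply: free_dirZ.
have hull_a : in_hull s a := IH a B (leq_trans rkB rkA) a_ball aB.
have hull_b : in_hull s b := IH b C (leq_trans rkC rkA) b_ball bC.
rewrite xab; apply: in_hull_convex => //.
by case/andP: t01 => /ltW -> ->.
Qed.

Lemma ball_in_hull x : N x <= 1 -> in_hull s x.
Proof.
move=> hx; apply: (in_hull_free_dir_rank (k := n) (A := 1%:M)) => //.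
  exact: rank_leq_col.
by move=> d _; apply: submx1.
Qed.

End KreinMilman.

Lemma polyhedral_ball_seq (R : realType) (n : nat) (N : 'rV[R]_n -> R) :
  polyhedral N -> exists2 s : seq 'rV[R]_n,
    (forall x, x \in s -> N x <= 1) & forall x, extreme_point (unit_ball N) x -> x \in s.
Proof.
move=> [s0 s0_ext]; exists [seq x <- s0 | N x <= 1].
  by move=> x; rewrite mem_filter => /andP[].
by move=> x x_ext; rewrite mem_filter s0_ext // andbT; case: x_ext.
Qed.

Section DualBall.
Variables (R : realType) (n : nat) (N : 'rV[R]_n -> R).
Hypothesis hN : is_norm N.
Implicit Types (x y : 'rV[R]_n) (c : 'cV[R]_n).

Lemma dual_ball_of_ball_max c y : (forall x, N x <= 1 -> ev c x <= ev c y) ->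
  0 < ev c y -> dual_ball N ((ev c y)^-1 *: c).
Proof.
move=> c_max cy0 x hx; rewrite evZl mulrC ler_norml.
have := c_max (- x); rewrite (NN hN) evNr => /(_ hx) cmx.
by rewrite ler_pdivlMr // ler_pdivrMr // mul1r c_max // andbT; lra.
Qed.

Lemma duality_mapZ a y : 0 < a -> duality_map N (a *: y) = duality_map N y.
Proof.
move=> a0; have an0 : a != 0 by rewrite gt_eqF.
apply: functional_extensionality => c.
apply: propositional_extensionality; rewrite /duality_map evZr (NZ hN) gtr0_norm //.
by split=> -[cB cy]; split=> //; [apply: (mulfI an0) | rewrite cy].
Qed.

End DualBall.

Lemma lin_span0 (R : realType) (n : nat) (S : 'rV[R]_n -> Prop) : lin_span S 0.
Proof. by exists 0%N, (fun _ => 0), (fun _ => 0); split; [case | rewrite big_ord0]. Qed.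

Lemma lin_span_face_L_set (R : realType) (n : nat) (N : 'rV[R]_n -> R)
    (E : 'cV[R]_n -> Prop) x :
  lin_span (face N E) x -> L_set E x.
Proof.
move=> [k [a [v [Fv ->]]]] phi psi Ephi Epsi.
have ev_comb c : E c -> ev c (\sum_(i < k) a i *: v i) = \sum_(i < k) a i.
  move=> Ec; rewrite /ev mulmx_suml summxE; apply: eq_bigr => i _.
  by rewrite -scalemxAl mxE -/(ev c (v i)) (Fv i).2 // mulr1.
by rewrite !ev_comb.
Qed.

Section Polyhedral.
Variables (R : realType) (n : nat) (N : 'rV[R]_n -> R).
Hypothesis hN : is_norm N.
Variable s : seq 'rV[R]_n.
Hypothesis s_ball : forall x, x \in s -> N x <= 1.
Hypothesis s_ext : forall x, extreme_point (unit_ball N) x -> x \in s.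
Implicit Types (x y w : 'rV[R]_n) (c : 'cV[R]_n).

Lemma cone_enters_ball y w : N y <= 1 -> cone (size s) (fun i => s`_i - y) w ->
  exists2 t, 0 < t & N (y + t *: w) <= 1.
Proof.
move=> hy [mu [mu0 ->]].
set X := \sum_(i < size s) mu i *: s`_i.
pose M := \sum_(i < size s) mu i.
have M0 : 0 <= M by apply: sumr_ge0.
have NX : N X <= M.
  apply: le_trans (N_sum hN (size s) (fun i => mu i *: s`_i)) _; apply: ler_sum => i _.
  by rewrite (NZ hN) ger0_norm // ler_piMr // s_ball // mem_nth.
have t0 : 0 < (1 + M)^-1 by rewrite invr_gt0; lra.
exists (1 + M)^-1 => //.
have -> : y + (1 + M)^-1 *: \sum_(i < size s) mu i *: (s`_i - y) = (1 + M)^-1 *: (y + X).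
  under eq_bigr do rewrite scalerBr.
  rewrite sumrB -scaler_suml -/X -/M; apply/rowP => j; rewrite !mxE.
  by field; rewrite gt_eqF //; lra.
rewrite (NZ hN) gtr0_norm // ler_pdivrMl ?mulr1; last lra.
by apply: le_trans (ND hN _ _) _; rewrite lerD.
Qed.

Lemma max_on_ball c y : (forall i, (i < size s)%N -> ev c (s`_i - y) <= 0) ->
  forall x, N x <= 1 -> ev c x <= ev c y.
Proof.
move=> c_s x /(ball_in_hull hN s_ext) [lam [lam0 [lam1 ->]]].
rewrite (ev_sumr c (size s) (fun i => lam i *: s`_i)) -[ev c y]mul1r -lam1.
rewrite mulr_suml; apply: ler_sum => i _.
by rewrite evZr ler_wpM2l // -subr_le0 -evBr c_s.
Qed.

(* Farkas' lemma against the cone of [s`_i - y]: this is where polyhedrality enters. *)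
Lemma outward_dir_functional y w : N y = 1 ->
  (forall t, 0 < t -> 1 < N (y + t *: w)) ->
  exists c, dual_ball N c /\ ev c y = 1 /\ 0 < ev c w.
Proof.
move=> hy out.
have [/cone_enters_ball [|t t0]|[c [c_s cw]]] := farkas (size s) (fun i => s`_i - y) w.
- by rewrite hy.
- by rewrite leNgt out.
have c_max := max_on_ball c_s.
have w0 : w != 0 by apply: contraTneq cw => ->; rewrite ev0r ltxx.
have cy0 : 0 < ev c y.
  rewrite ltNge; apply/negP => cy_le0.
  have := c_max ((N w)^-1 *: w); rewrite (N_normalize hN w0) lexx => /(_ isT).
  have : 0 < (N w)^-1 * ev c w by rewrite mulr_gt0 ?invr_gt0 ?(N_gt0 hN).
  rewrite evZr; lra.
exists ((ev c y)^-1 *: c); split; first exact: dual_ball_of_ball_max.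
by rewrite !evZl mulVf ?gt_eqF // mulr_gt0 ?invr_gt0.
Qed.

Lemma norming_functional y : N y = 1 -> exists c, dual_ball N c /\ ev c y = 1.
Proof.
move=> hy; have [|c [cB [cy _]]] := @outward_dir_functional y y hy; last by exists c.
by move=> t t0; rewrite -{1}(scale1r y) -scalerDl (NZ hN) hy mulr1 gtr0_norm; lra.
Qed.

(* [J(0)] is the whole dual ball, which separates points. *)
Lemma L_set_duality_map0 x : L_set (duality_map N 0) x -> x = 0.
Proof.
move=> Lx; apply: NNPP => /eqP x0.
have [c [cB cx]] := norming_functional (N_normalize hN x0).
have J0 c' : dual_ball N c' -> duality_map N 0 c' by split; rewrite ?ev0r ?(N0 hN).
have zero_ball : dual_ball N 0 by move=> z _; rewrite ev0l normr0.
move: cx; rewrite evZr (Lx c 0 (J0 c cB) (J0 0 zero_ball)) ev0l mulr0.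
by move/eqP; rewrite eq_sym oner_eq0.
Qed.

Lemma L_set_sub_lin_span_face y x : N y = 1 ->
  L_set (duality_map N y) x -> lin_span (face N (duality_map N y)) x.
Proof.
move=> hy Lx.
have [c0 [c0B c0y]] := norming_functional hy.
have Jc0 : duality_map N y c0 by split; rewrite // hy.
pose w := x - ev c0 x *: y.
have Jw c : duality_map N y c -> ev c w = 0.
  by move=> Jc; rewrite evBr evZr (Lx c c0 Jc Jc0) Jc.2 hy mulr1 subrr.
have [t t0 ytw] : exists2 t, 0 < t & N (y + t *: w) <= 1.
  apply: NNPP => no_t.
  have [|c [cB [cy cw]]] := outward_dir_functional (w := w) hy.
    by move=> t t0; rewrite ltNge; apply: contra_notN no_t; exists t.
  by move: cw; rewrite Jw ?ltxx //; split; rewrite // hy.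
have face_y : face N (duality_map N y) y.
  by split=> [|c [_ ->]]; rewrite /unit_ball hy.
have face_ytw : face N (duality_map N y) (y + t *: w).
  by split=> // c Jc; rewrite evDr evZr Jw // mulr0 addr0 Jc.2 hy.
exists 2%N, (fun i => if i == ord0 then ev c0 x - t^-1 else t^-1),
  (fun i => if i == ord0 then y else y + t *: w).
split; first by move=> i; case: ifP.
rewrite !big_ord_recr big_ord0 /= add0r /w.
by apply/rowP => j; rewrite !mxE; field; rewrite gt_eqF.
Qed.

End Polyhedral.

Theorem lemma2p3 (R : realType) (n : nat) (N : 'rV[R]_n -> R)
  (hN : is_norm N) (hpoly : polyhedral N) (y : 'rV[R]_n) :
  forall x : 'rV[R]_n,
    L_set (duality_map N y) x <-> lin_span (face N (duality_map N y)) x.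
Proof.
have [s s_ball s_ext] := polyhedral_ball_seq hpoly.
move=> x; split; last exact: lin_span_face_L_set.
have [->|y0] := eqVneq y 0.
  by move=> /(L_set_duality_map0 hN s_ball s_ext) ->; apply: lin_span0.
have Ny_inv_gt0 : 0 < (N y)^-1 by rewrite invr_gt0 (N_gt0 hN).
rewrite -(duality_mapZ hN y Ny_inv_gt0).
exact (L_set_sub_lin_span_face hN s_ball s_ext (N_normalize hN y0)).
Qed.
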